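(* In a PIR scheme for a graph $G=(\mathcal{S},\mathcal{W})$, let $i,j\in[N]$ be two distinct servers that both store the $k$-th file $W_k\in\mathcal{W}$. Then \[ H(A_i)+H(A_j)\ \ge\ H\big(A_i\mid \mathcal{W}\setminus\{W_k\},\mathcal{Q}\big)+H\big(A_j\mid \mathcal{W}\setminus\{W_k\},\mathcal{Q}\big)\ \ge\ L. \]
   Context: Graph-based PIR model (non-colluding servers, 2-replication). A simple graph $G=(\mathcal{S},\mathcal{W})$ has vertex set $\mathcal{S}=\{S_1,\dots,S_N\}$ (servers) and edge set $\mathcal{W}=\{W_1,\dots,W_K\}$ (files); file $W_k$ is identified with the edge $\{S_i,S_j\}$ of the two servers storing it, $W_{S_i}$ denotes the set of files stored on $S_i$. Files are independent, each uniform on $\mathbb{F}_2^L$. A user wants $W_\theta$, $\theta$ uniform on $[K]$ and independent of the files; it generates queries $Q_1,\dots,Q_N$ ($Q_i$ sent to $S_i$), $\mathcal{Q}=\{Q_1,\dots,Q_N\}$, with $I(W_1,\dots,W_K;Q_1,\dots,Q_N)=0$. Server $S_i$ returns $A_i$ with $H(A_i\mid Q_i,W_{S_i})=0$. Reliability: $H(W_\theta\mid A_1,\dots,A_N,Q_1,\dots,Q_N)=0$. Privacy: $H(\theta\mid Q_i,W_{S_i})=\log K$ for every $i$. *)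

From HB Require Import structures.
From mathcomp Require Import all_boot all_order all_algebra.
From mathcomp Require Import reals exp.
Set Implicit Arguments. Unset Strict Implicit. Unset Printing Implicit Defensive.
Import Order.TTheory GRing.Theory Num.Theory.
Local Open Scope ring_scope.

(* logarithm in base 2 (entropies measured in bits, so H(W_k) = L) *)
Definition log2 (R : realType) (x : R) : R := ln x / ln 2.

Definition is_distr (R : realType) (Omega : finType) (P : Omega -> R) : Prop :=
  (forall w, 0 <= P w) /\ \sum_(w : Omega) P w = 1.

Definition pr (R : realType) (Omega : finType) (P : Omega -> R)
  (T : finType) (X : Omega -> T) (x : T) : R :=
  \sum_(w : Omega | X w == x) P w.

(* Shannon entropy H(X) (in bits); terms with Pr = 0 contribute 0 *)
Definition entropy (R : realType) (Omega : finType) (P : Omega -> R)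
  (T : finType) (X : Omega -> T) : R :=
  - \sum_(x : T) pr P X x * log2 (pr P X x).

Definition pairRV (Omega T U : Type) (X : Omega -> T) (Y : Omega -> U) :
  Omega -> T * U := fun w => (X w, Y w).

Definition centropy (R : realType) (Omega : finType) (P : Omega -> R)
  (T U : finType) (X : Omega -> T) (Y : Omega -> U) : R :=
  entropy P (pairRV X Y) - entropy P Y.

Definition minfo (R : realType) (Omega : finType) (P : Omega -> R)
  (T U : finType) (X : Omega -> T) (Y : Omega -> U) : R :=
  entropy P X + entropy P Y - entropy P (pairRV X Y).

(* A simple graph on servers 'I_N with files 'I_K as edges:
   file k is the 2-subset ends k of servers storing it; distinct files are distinct edges. *)
Definition simple_storage_graph (N K : nat) (ends : 'I_K -> {set 'I_N}) : Prop :=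
  (forall k, #|ends k| = 2) /\ injective ends.

Definition stored (N K : nat) (ends : 'I_K -> {set 'I_N}) (i : 'I_N) : {set 'I_K} :=
  [set k | i \in ends k].

(* The sub-collection (W_k)_{k in S} of the files, encoded as a finite function
   that is None outside S (an injective encoding of the tuple). *)
Definition filesOn (Omega : Type) (K : nat) (F : Type)
  (W : Omega -> {ffun 'I_K -> F}) (S : {set 'I_K}) : Omega -> {ffun 'I_K -> option F} :=
  fun w => [ffun k => if k \in S then Some (W w k) else None].

Definition allRV (Omega : Type) (N : nat) (T : Type) (X : 'I_N -> Omega -> T) :
  Omega -> {ffun 'I_N -> T} := fun w => [ffun i => X i w].

Definition file_type (L : nat) := 'rV['F_2]_L.

Definition is_PIR_scheme (R : realType) (Omega : finType) (P : Omega -> R)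
  (N K L : nat) (ends : 'I_K -> {set 'I_N})
  (QT AT : finType)
  (W : Omega -> {ffun 'I_K -> file_type L})
  (theta : Omega -> 'I_K)
  (Q : 'I_N -> Omega -> QT)
  (A : 'I_N -> Omega -> AT) : Prop :=
  is_distr P /\
      simple_storage_graph ends /\
      (forall k (v : file_type L), pr P (fun w => W w k) v = ((2 ^ L)%:R)^-1) /\
      (forall f : {ffun 'I_K -> file_type L},
          pr P W f = \prod_(k < K) pr P (fun w => W w k) (f k)) /\
      (forall t : 'I_K, pr P theta t = (K%:R)^-1) /\
      minfo P W (pairRV theta (allRV Q)) = 0 /\
      (forall i, centropy P (A i) (pairRV (Q i) (filesOn W (stored ends i))) = 0) /\
      centropy P (fun w => W w (theta w)) (pairRV (allRV A) (allRV Q)) = 0 /\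
      (forall i, centropy P theta (pairRV (Q i) (filesOn W (stored ends i)))
                 = log2 (K%:R)).

(* Let D be the law P conditioned on theta = k.  Each answer A_s is a function of
   (Q_s, W), and W is uniform and independent of Q under P and under D, so
   H(A_s | W_{-k}, Q) is the expectation of a fixed function of (Q_s, W); by privacy
   (Q_s, W) has the same law under P and D, hence conditioning on theta = k leaves
   H(A_s | W_{-k}, Q) unchanged.  Under D, no server other than i and j stores W_k, so
   (A_i, A_j, W_{-k}, Q) determines every answer, hence W_k by reliability.  Strong
   subadditivity then gives
     H(A_i | W_{-k}, Q) + H(A_j | W_{-k}, Q) >= H(A_i, A_j | W_{-k}, Q)
                                             >= H(W | W_{-k}, Q) = L.
   The first inequality of the theorem is H(A | Y) <= H(A). *)

From HB Require Import structures.
From mathcomp Require Import all_boot all_order all_algebra.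
From mathcomp Require Import reals exp.
From mathcomp Require Import ring lra.
Import Order.TTheory GRing.Theory Num.Theory.
Local Open Scope ring_scope.
Set Implicit Arguments. Unset Strict Implicit. Unset Printing Implicit Defensive.

Section Log2.
Variable R : realType.
Implicit Types x y : R.

Lemma ln2_gt0 : 0 < ln (2 : R).
Proof. by rewrite ln_gt0 // ltr1n. Qed.

Lemma log2M x y : 0 < x -> 0 < y -> log2 (x * y) = log2 x + log2 y.
Proof. by move=> x0 y0; rewrite /log2 lnM ?posrE // mulrDl. Qed.

Lemma log2V x : 0 < x -> log2 x^-1 = - log2 x.
Proof. by move=> x0; rewrite /log2 lnV ?posrE // mulNr. Qed.

Lemma log2_div x y : 0 < x -> 0 < y -> log2 (x / y) = log2 x - log2 y.
Proof. by move=> x0 y0; rewrite log2M ?invr_gt0 // log2V. Qed.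

Lemma ler_log2 x y : 0 < x -> 0 < y -> (log2 x <= log2 y) = (x <= y).
Proof. by move=> x0 y0; rewrite /log2 ler_pM2r ?invr_gt0 ?ln2_gt0 // ler_ln ?posrE. Qed.

Lemma log2_exp2 (n : nat) : log2 (2 ^ n)%:R = n%:R :> R.
Proof.
by rewrite /log2 natrX lnXn // mulrnAl mulfV ?gt_eqF ?ln2_gt0.
Qed.

Lemma ln_le_subr1 x : 0 < x -> ln x <= x - 1.
Proof.
move=> x0; have := @le_ln1Dx R (x - 1).
by rewrite (addrC x) addrA subrr add0r; apply; lra.
Qed.

Lemma sqr_sqrt_subr1_le x : 0 < x -> (Num.sqrt x - 1) ^+ 2 <= x - 1 - ln x.
Proof.
move=> x0; set s := Num.sqrt x.
have s0 : 0 < s by rewrite sqrtr_gt0.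
have xE : x = s ^+ 2 by rewrite sqr_sqrtr // ltW.
have := ln_le_subr1 s0.
by rewrite xE lnXn // sqrrB1 !mulr2n; lra.
Qed.

Lemma ln_eq_subr1 x : 0 < x -> ln x = x - 1 -> x = 1.
Proof.
move=> x0 lnx; have := sqr_sqrt_subr1_le x0; rewrite lnx subrr.
rewrite le_eqVlt ltNge sqr_ge0 orbF sqrf_eq0 subr_eq0 => /eqP s1.
by rewrite -(sqr_sqrtr (ltW x0)) s1 expr1n.
Qed.

End Log2.

Section Gibbs.
Variables (R : realType) (I : finType) (p r : I -> R).
Hypotheses (p_distr : is_distr p) (r_gt0 : forall i, 0 < p i -> 0 < r i).
Hypothesis mean_r_le1 : \sum_i p i * r i <= 1.

Let gap i := p i * (r i - 1 - ln (r i)).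

Let gap_ge0 i : 0 <= gap i.
Proof.
have := proj1 p_distr i; rewrite le0r => /predU1P [pi0|pi_gt0].
  by rewrite /gap pi0 mul0r.
by rewrite /gap mulr_ge0 ?subr_ge0 ?ln_le_subr1 ?r_gt0 // ltW.
Qed.

Let sum_log2_ratio :
  (\sum_i p i * log2 (r i)) * ln 2 = \sum_i p i * r i - \sum_i p i - \sum_i gap i.
Proof.
rewrite mulr_suml -!sumrB; apply: eq_bigr => i _.
by rewrite /gap /log2 -!mulrA mulVf ?gt_eqF ?ln2_gt0 //; ring.
Qed.

Let sum_gap_ge0 : 0 <= \sum_i gap i.
Proof. by apply: sumr_ge0 => i _; apply: gap_ge0. Qed.

Lemma gibbs_le : \sum_i p i * log2 (r i) <= 0.
Proof.
rewrite -(pmulr_lle0 _ (ln2_gt0 R)) sum_log2_ratio (proj2 p_distr).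
by have := mean_r_le1; have := sum_gap_ge0; lra.
Qed.

Lemma gibbs_eq1 : \sum_i p i * log2 (r i) = 0 -> forall i, 0 < p i -> r i = 1.
Proof.
move=> sum0 i pi_gt0.
have gaps0 : \sum_i gap i = 0.
  have := sum_log2_ratio; rewrite sum0 mul0r (proj2 p_distr).
  by have := mean_r_le1; have := sum_gap_ge0; lra.
have /eqP := @psumr_eq0P _ _ predT _ (fun j _ => gap_ge0 j) gaps0 i isT.
rewrite /gap mulf_eq0 gt_eqF //= subr_eq0 => /eqP lnr.
by apply: ln_eq_subr1; rewrite ?r_gt0.
Qed.

End Gibbs.

Lemma sum_pair (R : nmodType) (T U : finType) (F : T * U -> R) :
  \sum_t F t = \sum_x \sum_y F (x, y).
Proof. by rewrite pair_bigA; apply: eq_bigr => -[]. Qed.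

Section Probability.
Variables (R : realType) (Omega : finType) (D : Omega -> R).
Implicit Types T U V : finType.

Lemma eq_pr T U (X : Omega -> T) (Y : Omega -> U) x y :
  (forall w, (X w == x) = (Y w == y)) -> pr D X x = pr D Y y.
Proof. by move=> XY; apply: eq_bigl => w; rewrite XY. Qed.

Lemma pr_swap T U (X : Omega -> T) (Y : Omega -> U) x y :
  pr D (pairRV X Y) (x, y) = pr D (pairRV Y X) (y, x).
Proof. by apply: eq_pr => w; rewrite !xpair_eqE andbC. Qed.

Lemma pr_pairA T U V (X : Omega -> T) (Y : Omega -> U) (Z : Omega -> V) x y z :
  pr D (pairRV X (pairRV Y Z)) (x, (y, z)) = pr D (pairRV (pairRV X Y) Z) ((x, y), z).
Proof. by apply: eq_pr => w; rewrite !xpair_eqE andbA. Qed.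

Lemma sum_pr T (X : Omega -> T) : \sum_x pr D X x = \sum_w D w.
Proof. by rewrite [RHS](partition_big X xpredT). Qed.

Lemma sum_pr_pairr T U (X : Omega -> T) (Y : Omega -> U) y :
  \sum_x pr D (pairRV X Y) (x, y) = pr D Y y.
Proof.
rewrite [RHS](partition_big X xpredT) //; apply: eq_bigr => x _.
by apply: eq_bigl => w; rewrite xpair_eqE andbC.
Qed.

Lemma expectation_pr T (X : Omega -> T) (F : T -> R) :
  \sum_w D w * F (X w) = \sum_x pr D X x * F x.
Proof.
rewrite (partition_big X xpredT) //=; apply: eq_bigr => x _.
by rewrite mulr_suml; apply: eq_big => [w|w /eqP ->].
Qed.

Lemma entropyE T (X : Omega -> T) : entropy D X = - \sum_w D w * log2 (pr D X (X w)).
Proof. by rewrite /entropy (expectation_pr X (fun x => log2 (pr D X x))). Qed.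

Hypothesis D_ge0 : forall w, 0 <= D w.

Lemma pr_ge0 T (X : Omega -> T) x : 0 <= pr D X x.
Proof. exact: sumr_ge0. Qed.

Lemma pr_ge_weight T (X : Omega -> T) w : D w <= pr D X (X w).
Proof. by rewrite /pr (bigD1 w) //= lerDl sumr_ge0. Qed.

Lemma pr_gt0 T (X : Omega -> T) w : 0 < D w -> 0 < pr D X (X w).
Proof. by move=> Dw; apply: lt_le_trans Dw (pr_ge_weight X w). Qed.

Lemma pr_neq0_supp T (X : Omega -> T) x :
  pr D X x != 0 -> exists2 w, 0 < D w & X w = x.
Proof.
move=> /eqP /psumr_neq0P [w|w /andP [/eqP Xw Dw]]; first by move=> _; exact: D_ge0.
by exists w.
Qed.

Lemma eq_pr_supp T (X Y : Omega -> T) x :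
  (forall w, 0 < D w -> X w = Y w) -> pr D X x = pr D Y x.
Proof.
move=> XY; rewrite /pr big_mkcond [RHS]big_mkcond; apply: eq_bigr => w _.
by have := D_ge0 w; rewrite le0r => /predU1P [->|/XY ->]; rewrite ?if_same.
Qed.

Lemma pr_comp T U (X : Omega -> T) (Z : Omega -> U) (f : T -> U) u :
  (forall w, 0 < D w -> Z w = f (X w)) -> pr D Z u = \sum_(x | f x == u) pr D X x.
Proof.
move=> ZE; rewrite (eq_pr_supp _ ZE) /pr (partition_big X (fun x => f x == u)) //=.
by apply: eq_bigr => x fx; apply: eq_bigl => w; case: (X w =P x) => [->|]; rewrite ?fx ?andbF.
Qed.

Lemma pr_pair_comp T U V (X : Omega -> T) (Y : Omega -> U) (Z : Omega -> V)
    (f : T -> U -> V) v y :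
  (forall w, 0 < D w -> Z w = f (X w) (Y w)) ->
  pr D (pairRV Z Y) (v, y) = \sum_(x | f x y == v) pr D (pairRV X Y) (x, y).
Proof.
move=> ZE.
rewrite (@eq_pr_supp _ _ (pairRV (fun w => f (X w) (Y w)) Y)); last first.
  by move=> w Dw; rewrite /pairRV ZE.
rewrite /pr (partition_big X (fun x => f x y == v)) /=; last first.
  by move=> w; rewrite xpair_eqE => /andP [/eqP <- /eqP ->].
apply: eq_bigr => x fx; apply: eq_bigl => w; rewrite !xpair_eqE.
by case: (X w =P x) => [->|_]; case: (Y w =P y) => [->|_]; rewrite ?fx ?andbF.
Qed.

Lemma pr_pair_le T U (X : Omega -> T) (Y : Omega -> U) x y :
  pr D (pairRV X Y) (x, y) <= pr D Y y.
Proof.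
by rewrite -[pr D Y y](sum_pr_pairr X) (bigD1 x) //= lerDl sumr_ge0 // => x' _; apply: pr_ge0.
Qed.

Lemma pr_pair_add_le T U (X : Omega -> T) (Y : Omega -> U) x x' y : x != x' ->
  pr D (pairRV X Y) (x, y) + pr D (pairRV X Y) (x', y) <= pr D Y y.
Proof.
move=> xx'; rewrite -[pr D Y y](sum_pr_pairr X) (bigD1 x) //= (bigD1 x') 1?eq_sym //=.
by rewrite addrA lerDl sumr_ge0 // => x'' _; apply: pr_ge0.
Qed.

Lemma centropyE T U (X : Omega -> T) (Y : Omega -> U) :
  centropy D X Y = - \sum_w D w * log2 (pr D (pairRV X Y) (X w, Y w) / pr D Y (Y w)).
Proof.
rewrite /centropy !entropyE opprK addrC -opprB -sumrB; congr (- _).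
apply: eq_bigr => w _.
have := D_ge0 w; rewrite le0r => /predU1P [->|Dw]; first by rewrite !mul0r subrr.
by rewrite log2_div ?(pr_gt0 (pairRV X Y)) ?pr_gt0 // mulrBr.
Qed.

Definition determined_by T U (X : Omega -> T) (Y : Omega -> U) :=
  forall w w', 0 < D w -> 0 < D w' -> Y w = Y w' -> X w = X w'.

Lemma entropy_le_determined T U (X : Omega -> T) (Y : Omega -> U) :
  determined_by X Y -> entropy D X <= entropy D Y.
Proof.
move=> XY; rewrite !entropyE lerN2; apply: ler_sum => w _.
have := D_ge0 w; rewrite le0r => /predU1P [->|Dw]; first by rewrite !mul0r.
rewrite ler_wpM2l // ler_log2 ?pr_gt0 // /pr big_mkcond [X in _ <= X]big_mkcond.
apply: ler_sum => w' _.
have := D_ge0 w'; rewrite le0r => /predU1P [->|Dw']; first by rewrite !if_same.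
case: (Y w' =P Y w) => [/(XY w' w Dw' Dw) ->|_]; first by rewrite eqxx.
by case: ifP => // _; apply: ltW.
Qed.

Lemma centropy_le_determined T T' U (X : Omega -> T) (X' : Omega -> T') (Y : Omega -> U) :
  determined_by X' (pairRV X Y) -> centropy D X' Y <= centropy D X Y.
Proof.
move=> X'XY; rewrite lerD2r; apply: entropy_le_determined => w w' Dw Dw' e.
by rewrite /pairRV (X'XY w w' Dw Dw' e); case: e => _ ->.
Qed.

Definition indep T U (X : Omega -> T) (Y : Omega -> U) :=
  forall x y, pr D (pairRV X Y) (x, y) = pr D X x * pr D Y y.

Lemma indep_sym T U (X : Omega -> T) (Y : Omega -> U) : indep X Y -> indep Y X.
Proof. by move=> XY y x; rewrite pr_swap XY mulrC. Qed.

Lemma indep_comp_r T U V (X : Omega -> T) (Y : Omega -> U) (Y' : Omega -> V) (f : U -> V) :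
  (forall w, Y' w = f (Y w)) -> indep X Y -> indep X Y'.
Proof.
move=> Y'E XY x v.
rewrite pr_swap (@pr_pair_comp _ _ _ Y X Y' (fun y _ => f y)) => [|w _]; last exact: Y'E.
rewrite (@pr_comp _ _ Y Y' f) => [|w _]; last exact: Y'E.
by rewrite mulr_sumr; apply: eq_bigr => y _; rewrite pr_swap XY.
Qed.

Lemma indep_pair_r T U V (X : Omega -> T) (Y : Omega -> U) (Z : Omega -> V) :
  indep Z (pairRV X Y) -> indep X Y -> indep X (pairRV Y Z).
Proof.
move=> ZXY XY x [y z].
have ZY : indep Z Y := indep_comp_r (f := snd) (fun w => erefl) ZXY.
by rewrite pr_pairA [LHS]pr_swap ZXY XY [pr D (pairRV Y Z) _]pr_swap ZY mulrCA.
Qed.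

Hypothesis D1 : \sum_w D w = 1.

Let D_distr : is_distr D. Proof. by split. Qed.

Lemma determined_by_fun T U (X : Omega -> T) (Y : Omega -> U) :
  determined_by X Y -> exists h : U -> T, forall w, 0 < D w -> X w = h (Y w).
Proof.
move=> XY.
have [w0 _] : exists w0, 0 < D w0.
  have /psumr_neq0P [//|w0 /andP [_ Dw0]] : \sum_w D w <> 0.
    by rewrite D1 => /eqP; rewrite oner_eq0.
  by exists w0.
exists (fun y => if [pick w | (0 < D w) && (Y w == y)] is Some w then X w else X w0).
move=> w Dw; case: pickP => [w' /andP [Dw' /eqP Yw']|/(_ w)]; last by rewrite Dw eqxx.
exact: XY.
Qed.

Lemma centropy_eq0_determined T U (X : Omega -> T) (Y : Omega -> U) :
  centropy D X Y = 0 -> determined_by X Y.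
Proof.
move=> XY0.
pose r w := pr D (pairRV X Y) (X w, Y w) / pr D Y (Y w).
have r_gt0 w : 0 < D w -> 0 < r w.
  by move=> Dw; rewrite divr_gt0 ?(pr_gt0 (pairRV X Y)) ?pr_gt0.
have sum_le1 : \sum_w D w * r w <= 1.
  rewrite -D1; apply: ler_sum => w _; rewrite ler_piMr // /r.
  have [->|pY0] := eqVneq (pr D Y (Y w)) 0; first by rewrite invr0 mulr0 ler01.
  by rewrite ler_pdivrMr ?mul1r ?pr_pair_le // lt_def pY0 pr_ge0.
have r1 := gibbs_eq1 D_distr r_gt0 sum_le1.
move: XY0; rewrite centropyE => /eqP; rewrite oppr_eq0 => /eqP /r1 {}r1.
move=> w w' Dw Dw' Yww'; apply/eqP/negPn/negP => XX'.
have e : pr D (pairRV X Y) (X w', Y w) = pr D Y (Y w).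
  by rewrite Yww'; apply: divr1_eq; apply: r1.
have := pr_pair_add_le X Y (Y w) XX'; rewrite e (divr1_eq (r1 w Dw)).
by have := pr_gt0 Y Dw; lra.
Qed.

Lemma sum_pr_cond_prod T U V (X : Omega -> T) (Z : Omega -> U) (Y : Omega -> V) :
  \sum_(t : (T * U) * V)
     pr D (pairRV X Y) (t.1.1, t.2) * pr D (pairRV Z Y) (t.1.2, t.2) / pr D Y t.2 = 1.
Proof.
rewrite !sum_pair /=.
under eq_bigr do rewrite exchange_big /=.
rewrite exchange_big -D1 -(sum_pr Y); apply: eq_bigr => y _.
under eq_bigr do rewrite -mulr_suml.
rewrite -mulr_suml -big_distrlr /= !sum_pr_pairr.
by have [->|pY0] := eqVneq (pr D Y y) 0; rewrite ?mul0r // mulfK.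
Qed.

Lemma centropy_pair_le T U V (X : Omega -> T) (Z : Omega -> U) (Y : Omega -> V) :
  centropy D (pairRV X Z) Y <= centropy D X Y + centropy D Z Y.
Proof.
pose G (t : (T * U) * V) := pr D (pairRV X Y) (t.1.1, t.2) * pr D (pairRV Z Y) (t.1.2, t.2)
  / (pr D (pairRV (pairRV X Z) Y) t * pr D Y t.2).
pose r w := G ((X w, Z w), Y w).
have r_gt0 w : 0 < D w -> 0 < r w.
  by move=> Dw; rewrite !(divr_gt0, mulr_gt0) // (pr_gt0 (pairRV X Y), pr_gt0 (pairRV Z Y),
    pr_gt0 (pairRV (pairRV X Z) Y), pr_gt0 Y).
have sum_le1 : \sum_w D w * r w <= 1.
  rewrite (expectation_pr (pairRV (pairRV X Z) Y) G).
  rewrite -[leRHS](sum_pr_cond_prod X Z Y); apply: ler_sum => t _.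
  have [->|p0] := eqVneq (pr D (pairRV (pairRV X Z) Y) t) 0.
    by rewrite mul0r !(mulr_ge0, invr_ge0, pr_ge0).
  by rewrite /G invfM mulrCA mulVKf.
have := gibbs_le D_distr r_gt0 sum_le1.
suff -> : \sum_w D w * log2 (r w) =
    centropy D (pairRV X Z) Y - centropy D X Y - centropy D Z Y by lra.
rewrite !centropyE !opprK -sumrN -!big_split /=; apply: eq_bigr => w _.
have := D_ge0 w; rewrite le0r => /predU1P [->|Dw]; first by rewrite !mul0r oppr0 !addr0.
rewrite /r /G /= !log2_div ?log2M ?(divr_gt0, mulr_gt0) //
  ?(pr_gt0 (pairRV X Y), pr_gt0 (pairRV Z Y), pr_gt0 (pairRV (pairRV X Z) Y), pr_gt0 Y) //.
ring.
Qed.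

Lemma centropy_unit T (X : Omega -> T) :
  centropy D X (fun _ => tt) = entropy D X.
Proof.
rewrite centropyE entropyE; congr (- _); apply: eq_bigr => w _ /=.
have -> : pr D (fun _ => tt) tt = 1 by rewrite -D1; apply: eq_bigl.
by rewrite divr1; congr (_ * log2 _); apply: eq_pr => w'; rewrite xpair_eqE andbT.
Qed.

Lemma entropy_pair_le T U (X : Omega -> T) (Y : Omega -> U) :
  entropy D (pairRV X Y) <= entropy D X + entropy D Y.
Proof. by rewrite -!centropy_unit centropy_pair_le. Qed.

Lemma centropy_le_entropy T U (X : Omega -> T) (Y : Omega -> U) :
  centropy D X Y <= entropy D X.
Proof. by rewrite lerBlDr entropy_pair_le. Qed.

Lemma minfo_eq0_indep T U (X : Omega -> T) (Y : Omega -> U) :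
  minfo D X Y = 0 -> indep X Y.
Proof.
move=> mi0.
pose q (t : T * U) := pr D X t.1 * pr D Y t.2.
pose G t := q t / pr D (pairRV X Y) t.
pose r w := G (X w, Y w).
have r_gt0 w : 0 < D w -> 0 < r w.
  by move=> Dw; rewrite /r /G /q !(divr_gt0, mulr_gt0) ?pr_gt0 ?(pr_gt0 (pairRV X Y)).
have sum_q : \sum_t q t = 1.
  by rewrite sum_pair /= -big_distrlr /= !sum_pr D1 mulr1.
have sum_le1 : \sum_w D w * r w <= 1.
  rewrite (expectation_pr (pairRV X Y) G) -[leRHS]sum_q; apply: ler_sum => t _.
  have [->|p0] := eqVneq (pr D (pairRV X Y) t) 0; first by rewrite mul0r mulr_ge0 ?pr_ge0.
  by rewrite /G mulrC divfK.
have r1 : forall w, 0 < D w -> r w = 1.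
  apply: gibbs_eq1 D_distr r_gt0 sum_le1 _.
  suff -> : \sum_w D w * log2 (r w) =
      \sum_w D w * log2 (pr D X (X w)) + \sum_w D w * log2 (pr D Y (Y w))
      - \sum_w D w * log2 (pr D (pairRV X Y) (pairRV X Y w)).
    by move: mi0; rewrite /minfo !entropyE; lra.
  rewrite -big_split -sumrB /=; apply: eq_bigr => w _.
  have := D_ge0 w; rewrite le0r => /predU1P [->|Dw]; first by rewrite !mul0r; ring.
  by rewrite /r /G /q log2_div ?log2M ?mulr_gt0 ?pr_gt0 ?(pr_gt0 (pairRV X Y)) //; ring.
have pq_supp t : pr D (pairRV X Y) t != 0 -> pr D (pairRV X Y) t = q t.
  by case/pr_neq0_supp => w Dw <-; apply/esym/divr1_eq; apply: r1.
suff pq t : pr D (pairRV X Y) t = q t by move=> x y; apply: (pq (x, y)).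
apply/eqP; rewrite eq_sym -subr_eq0; apply/eqP.
have d_ge0 t' : 0 <= q t' - pr D (pairRV X Y) t'.
  have [->|/pq_supp ->] := eqVneq (pr D (pairRV X Y) t') 0; last by rewrite subrr.
  by rewrite subr0 mulr_ge0 ?pr_ge0.
apply: (@psumr_eq0P _ _ predT _ (fun t' _ => d_ge0 t')) => //.
by rewrite sumrB sum_q sum_pr D1 subrr.
Qed.

End Probability.

Definition condition (R : realType) (Omega T : finType) (P : Omega -> R)
    (C : Omega -> T) (c : T) : Omega -> R :=
  fun w => if C w == c then P w / pr P C c else 0.

Section Conditioning.
Variables (R : realType) (Omega S : finType) (P : Omega -> R) (C : Omega -> S) (c : S).
Hypotheses (P_ge0 : forall w, 0 <= P w) (pr_Cc_neq0 : pr P C c != 0).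
Implicit Types T U : finType.

Let Pc := condition P C c.

Lemma condition_supp w : 0 < Pc w -> 0 < P w /\ C w = c.
Proof.
rewrite /Pc /condition; case: eqP => [-> Pw|_]; last by rewrite ltxx.
split=> //.
by rewrite -(pmulr_lgt0 _ (_ : 0 < (pr P C c)^-1)) // invr_gt0 lt_def pr_Cc_neq0 pr_ge0.
Qed.

Lemma pr_condition T (X : Omega -> T) x :
  pr Pc X x = pr P (pairRV C X) (c, x) / pr P C c.
Proof.
rewrite /pr mulr_suml [in RHS]big_mkcond [in LHS]big_mkcond /=; apply: eq_bigr => w _.
by rewrite /Pc /condition xpair_eqE; case: (C w == c); case: (X w == x); rewrite ?mul0r.
Qed.

Lemma condition_distr : is_distr Pc.
Proof.
split=> [w|]; first by rewrite /Pc /condition; case: eqP; rewrite ?divr_ge0 ?pr_ge0.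
have -> : \sum_w Pc w = pr Pc (fun _ => tt) tt by apply: eq_bigl.
rewrite pr_condition (_ : pr P _ (c, tt) = pr P C c) ?divff //.
by apply: eq_pr => w; rewrite xpair_eqE andbT.
Qed.

Lemma pr_condition_indep T (X : Omega -> T) x : indep P X C -> pr Pc X x = pr P X x.
Proof. by move=> XC; rewrite pr_condition pr_swap XC mulfK. Qed.

Lemma indep_condition T U (X : Omega -> T) (Y : Omega -> U) :
  indep P X (pairRV C Y) -> indep Pc X Y.
Proof.
move=> XCY x y.
have XC : indep P X C := indep_comp_r (f := fst) P_ge0 (fun w => erefl) XCY.
rewrite !pr_condition
  (_ : pr P (pairRV C (pairRV X Y)) _ = pr P (pairRV X (pairRV C Y)) (x, (c, y))).
  by rewrite XCY [pr P (pairRV C X) _]pr_swap XC mulfK // mulrA.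
by apply: eq_pr => w; rewrite !xpair_eqE andbCA.
Qed.

End Conditioning.

(* For [X] uniform, the probability that [g X = g x] given [rho X = rho x]. *)
Definition fibre_ratio {R : realType} (T V T' : finType) (g : T -> V) (rho : T -> T') (x : T)
  : R :=
  #|[set x' | (g x', rho x') == (g x, rho x)]|%:R / #|[set x' | rho x' == rho x]|%:R.

Section UniformIndependent.
Variables (R : realType) (Omega T U : finType) (F : Omega -> R).
Variables (X : Omega -> T) (Y : Omega -> U) (c : R).
Hypotheses (F_ge0 : forall w, 0 <= F w) (XY : indep F X Y) (X_unif : forall x, pr F X x = c).

Lemma pr_pair_comp_unif (V : finType) (Z : Omega -> V) (g : T -> U -> V) v y :
  (forall w, 0 < F w -> Z w = g (X w) (Y w)) ->
  pr F (pairRV Z Y) (v, y) = #|[set x | g x y == v]|%:R * c * pr F Y y.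
Proof.
move=> ZE; rewrite (pr_pair_comp F_ge0 _ _ ZE).
under eq_bigr do rewrite XY X_unif.
rewrite -mulrA mulr_natl -sumr_const; apply: eq_bigl => x; by rewrite inE.
Qed.

Lemma centropy_comp_unif (V T' : finType) (Z : Omega -> V) (g : U -> T -> V) (rho : T -> T') :
  (forall w, 0 < F w -> Z w = g (Y w) (X w)) ->
  centropy F Z (pairRV (fun w => rho (X w)) Y) =
  - \sum_w F w * log2 (fibre_ratio (g (Y w)) rho (X w)).
Proof.
move=> ZE; rewrite centropyE //; congr (- _); apply: eq_bigr => w _.
have := F_ge0 w; rewrite le0r => /predU1P [->|Fw]; first by rewrite !mul0r.
have := pr_gt0 F_ge0 (pairRV (fun w => rho (X w)) Y) Fw.
rewrite pr_pairA (@pr_pair_comp_unif _ _ (fun x y => (g y x, rho x))); last first.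
  by move=> w' Fw'; rewrite /pairRV ZE.
rewrite (@pr_pair_comp_unif _ _ (fun x _ => rho x)) // ZE // => den_gt0.
move: den_gt0; rewrite lt0r !mulf_eq0 !negb_or => /andP [/andP [/andP [n0 c0] pY0] _].
by rewrite /fibre_ratio; congr (_ * log2 _); field; rewrite n0 c0 pY0.
Qed.

End UniformIndependent.

Lemma centropy_eq_of_law (R : realType) (Omega T U U' V T' : finType) (P D : Omega -> R)
    (X : Omega -> T) (Y : Omega -> U) (Y' : Omega -> U') (Z : Omega -> V)
    (pi : U -> U') (h : U' -> T -> V) (rho : T -> T') (c : R) :
  (forall w, 0 <= P w) -> (forall w, 0 <= D w) -> (forall w, 0 < D w -> 0 < P w) ->
  indep P X Y -> indep D X Y -> (forall x, pr P X x = c) ->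
  (forall w, Y' w = pi (Y w)) ->
  (forall w, 0 < P w -> Z w = h (Y' w) (X w)) ->
  (forall y x, pr D (pairRV Y' X) (y, x) = pr P (pairRV Y' X) (y, x)) ->
  centropy D Z (pairRV (fun w => rho (X w)) Y) =
  centropy P Z (pairRV (fun w => rho (X w)) Y).
Proof.
move=> P_ge0 D_ge0 DP XY_P XY_D X_unif Y'E ZE law.
have X_unif_D x : pr D X x = c.
  rewrite -(X_unif x) -(sum_pr_pairr D Y') -(sum_pr_pairr P Y').
  by apply: eq_bigr => y _; rewrite law.
have ZE_P w : 0 < P w -> Z w = h (pi (Y w)) (X w) by move=> Pw; rewrite -Y'E ZE.
rewrite (centropy_comp_unif (g := fun y => h (pi y)) D_ge0 XY_D X_unif_D rho); last first.
  by move=> w Dw; apply: ZE_P; apply: DP.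
rewrite (centropy_comp_unif (g := fun y => h (pi y)) P_ge0 XY_P X_unif rho ZE_P).
congr (- _); under eq_bigr do rewrite -Y'E; under [RHS]eq_bigr do rewrite -Y'E.
rewrite !(expectation_pr _ (pairRV Y' X) (fun t => log2 (fibre_ratio (h t.1) rho t.2))).
by apply: eq_bigr => -[y x] _; rewrite law.
Qed.

Definition restrict (K : nat) (F : Type) (S : {set 'I_K}) (f : {ffun 'I_K -> F}) :
  {ffun 'I_K -> option F} := [ffun l => if l \in S then Some (f l) else None].

Section Restriction.
Variables (K : nat) (F : finType).
Implicit Types (S : {set 'I_K}) (f g : {ffun 'I_K -> F}).

Lemma restrict_subset S S' f g :
  S \subset S' -> restrict S' f = restrict S' g -> restrict S f = restrict S g.
Proof.
move=> SS' fg; apply/ffunP => l; rewrite !ffunE; case: ifP => // lS.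
by have := congr1 (fun h : {ffun _ -> option F} => h l) fg; rewrite !ffunE (subsetP SS' l lS).
Qed.

Lemma restrict_setC1_inj (k : 'I_K) f g :
  restrict [set~ k] f = restrict [set~ k] g -> f k = g k -> f = g.
Proof.
move=> fg fgk; apply/ffunP => l; have [->//|lk] := eqVneq l k.
by have := congr1 (fun h : {ffun _ -> option F} => h l) fg; rewrite !ffunE in_setC1 lk => -[].
Qed.

Lemma card_restrict_setC1 (k : 'I_K) f :
  #|[set g | restrict [set~ k] g == restrict [set~ k] f]| = #|F|.
Proof.
pose upd v : {ffun 'I_K -> F} := [ffun l => if l == k then v else f l].
have upd_inj : injective upd.
  by move=> v v' /(congr1 (fun g : {ffun _ -> F} => g k)); rewrite !ffunE eqxx.
have restrict_upd v : restrict [set~ k] (upd v) = restrict [set~ k] f.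
  by apply/ffunP => l; rewrite !ffunE in_setC1; case: eqP.
rewrite -cardsT -(card_imset _ upd_inj); apply: eq_card => g; rewrite inE.
apply/eqP/imsetP => [gf|[v _ ->]]; last exact: restrict_upd.
exists (g k); first by rewrite inE.
by apply: (restrict_setC1_inj (k := k)); rewrite ?restrict_upd // /upd ffunE eqxx.
Qed.

Lemma fibre_ratio_restrict_setC1 (R : realType) (k : 'I_K) f :
  fibre_ratio (fun g => g) (restrict [set~ k]) f = #|F|%:R^-1 :> R.
Proof.
rewrite /fibre_ratio card_restrict_setC1 (_ : [set g | _ == _] = [set f]) ?cards1 ?mul1r //.
by apply/setP => g; rewrite !inE xpair_eqE andb_idr // => /eqP ->.
Qed.

End Restriction.

Lemma stored_subset_setC1 (N K : nat) (ends : 'I_K -> {set 'I_N}) (k : 'I_K) (i j s : 'I_N) :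
  #|ends k| = 2 -> i != j -> k \in stored ends i -> k \in stored ends j ->
  s != i -> s != j -> stored ends s \subset [set~ k].
Proof.
move=> card2 ij ki kj si sj.
have endsE : [set i; j] = ends k.
  apply/eqP; rewrite eqEcard cards2 ij card2 andbT; apply/subsetP => x; rewrite !inE.
  by case/orP => /eqP ->; [move: ki | move: kj]; rewrite inE.
apply/subsetP => l; rewrite !inE => sl; apply/eqP => lk.
by move: sl; rewrite lk -endsE !inE (negbTE si) (negbTE sj).
Qed.

Section PIRScheme.
Variables (R : realType) (Omega : finType) (P : Omega -> R) (N K L : nat)
  (ends : 'I_K -> {set 'I_N}) (QT AT : finType) (W : Omega -> {ffun 'I_K -> file_type L})
  (theta : Omega -> 'I_K) (Q : 'I_N -> Omega -> QT) (A : 'I_N -> Omega -> AT).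
Hypothesis PIR : is_PIR_scheme P ends W theta Q A.
Variable k : 'I_K.

Let P_ge0 : forall w, 0 <= P w. Proof. by case: PIR => -[]. Qed.
Let P1 : \sum_w P w = 1. Proof. by case: PIR => -[]. Qed.

Let answer_determined s :
  determined_by P (A s) (pairRV (Q s) (filesOn W (stored ends s))).
Proof.
case: PIR => _ [_ [_ [_ [_ [_ [det _]]]]]].
exact: (centropy_eq0_determined P_ge0 P1 (det s)).
Qed.

Let request_determined :
  determined_by P (fun w => W w (theta w)) (pairRV (allRV A) (allRV Q)).
Proof.
case: PIR => _ [_ [_ [_ [_ [_ [_ [rel _]]]]]]].
exact: (centropy_eq0_determined P_ge0 P1 rel).
Qed.

Let pr_files f : pr P W f = (2 ^ L)%:R^-1 ^+ K.
Proof.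
case: PIR => _ [_ [unif [prod _]]].
by rewrite prod; under eq_bigr do rewrite unif; rewrite prodr_const card_ord.
Qed.

Let files_indep : indep P W (pairRV theta (allRV Q)).
Proof.
case: PIR => _ [_ [_ [_ [_ [mi _]]]]].
exact: (minfo_eq0_indep P_ge0 P1 mi).
Qed.

Let pr_theta t : pr P theta t = K%:R^-1.
Proof. by case: PIR => _ [_ [_ [_ [unif _]]]]. Qed.

Let K_gt0 : (0 < K)%N. Proof. exact: leq_ltn_trans (leq0n k) (ltn_ord k). Qed.

Let pr_theta_neq0 : pr P theta k != 0.
Proof. by rewrite pr_theta invr_eq0 pnatr_eq0 -lt0n. Qed.

Let entropy_theta : entropy P theta = log2 K%:R.
Proof.
rewrite /entropy; under eq_bigr do rewrite pr_theta.
rewrite sumr_const card_ord log2V ?ltr0n //.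
by rewrite mulrN mulNrn opprK -mulrnAl -mulr_natr mulVf ?mul1r // pnatr_eq0 -lt0n.
Qed.

Let theta_indep s : indep P (pairRV (Q s) W) theta.
Proof.
have priv : indep P theta (pairRV (Q s) (filesOn W (stored ends s))).
  apply: (minfo_eq0_indep P_ge0 P1).
  case: PIR => _ [_ [_ [_ [_ [_ [_ [_ priv]]]]]]].
  by move: (priv s); rewrite /centropy /minfo entropy_theta; lra.
have files_query : indep P W (pairRV theta (Q s)).
  apply: (indep_comp_r (f := fun tq : _ * {ffun _ -> QT} => (tq.1, tq.2 s)) P_ge0 _
    files_indep) => w.
  by rewrite /pairRV /allRV ffunE.
have theta_query : indep P theta (Q s).
  exact: (indep_comp_r (f := fst) P_ge0 (fun w => erefl) priv).
exact: (indep_sym (indep_pair_r P_ge0 files_query theta_query)).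
Qed.

Let D := condition P theta k.

Let D_ge0 : forall w, 0 <= D w. Proof. by case: (condition_distr P_ge0 pr_theta_neq0). Qed.
Let D1 : \sum_w D w = 1. Proof. by case: (condition_distr P_ge0 pr_theta_neq0). Qed.
Let D_supp w : 0 < D w -> 0 < P w /\ theta w = k. Proof. exact: condition_supp. Qed.

Lemma centropy_answer_condition s :
  centropy D (A s) (pairRV (filesOn W [set~ k]) (allRV Q)) =
  centropy P (A s) (pairRV (filesOn W [set~ k]) (allRV Q)).
Proof.
have [h Ah] := determined_by_fun P_ge0 P1 (@answer_determined s).
apply: (centropy_eq_of_law (X := W) (Y' := Q s) (pi := fun qq : {ffun _ -> QT} => qq s)
  (h := fun q f => h (q, restrict (stored ends s) f)) (restrict [set~ k])) => //.
- by move=> w /D_supp [].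
- exact: (indep_comp_r (f := snd) P_ge0 (fun w => erefl) files_indep).
- exact: indep_condition.
- by move=> w; rewrite ffunE.
- by move=> y f; apply: pr_condition_indep.
Qed.

Lemma centropy_files_condition :
  centropy D W (pairRV (filesOn W [set~ k]) (allRV Q)) = L%:R.
Proof.
have files_queries_D : indep D W (allRV Q) by apply: indep_condition.
have pr_files_D f : pr D W f = (2 ^ L)%:R^-1 ^+ K.
  rewrite pr_condition_indep ?pr_files //.
  exact: (indep_comp_r (f := fst) P_ge0 (fun w => erefl) files_indep).
rewrite (centropy_comp_unif (g := fun _ f => f) D_ge0 files_queries_D pr_files_D
  (restrict [set~ k])) //.
under eq_bigr do rewrite fibre_ratio_restrict_setC1 card_mx card_Fp // mul1n.
rewrite log2V ?ltr0n ?expn_gt0 // log2_exp2.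
by rewrite -mulr_suml D1 mul1r opprK.
Qed.

Variables (i j : 'I_N).
Hypotheses (ij : i != j) (ki : k \in stored ends i) (kj : k \in stored ends j).

Lemma files_determined_by_answers :
  determined_by D W (pairRV (pairRV (A i) (A j)) (pairRV (filesOn W [set~ k]) (allRV Q))).
Proof.
move=> w w' /D_supp [Pw tw] /D_supp [Pw' tw'] [Ai Aj Wk' QQ].
have card_ends : #|ends k| = 2 by case: PIR => _ [[card2 _] _].
have answers s : A s w = A s w'.
  have [->//|si] := eqVneq s i; have [->//|sj] := eqVneq s j.
  apply: (@answer_determined s) Pw Pw' _; congr (_, _).
    by have := congr1 (fun qq : {ffun _ -> QT} => qq s) QQ; rewrite !ffunE.
  exact: restrict_subset (stored_subset_setC1 card_ends ij ki kj si sj) Wk'.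
have Wk : W w k = W w' k.
  rewrite -{1}tw -tw'; apply: request_determined Pw Pw' _.
  by rewrite /pairRV QQ; congr (_, _); apply/ffunP => s; rewrite !ffunE answers.
exact: restrict_setC1_inj Wk' Wk.
Qed.

Lemma answers_centropy_ge :
  L%:R <= centropy P (A i) (pairRV (filesOn W [set~ k]) (allRV Q))
          + centropy P (A j) (pairRV (filesOn W [set~ k]) (allRV Q)).
Proof.
rewrite -!centropy_answer_condition -centropy_files_condition.
apply: le_trans (centropy_pair_le D_ge0 D1 _ _ _).
exact: (centropy_le_determined D_ge0 files_determined_by_answers).
Qed.

End PIRScheme.

Theorem lemma1 (R : realType) (Omega : finType) (P : Omega -> R)
  (N K L : nat) (ends : 'I_K -> {set 'I_N}) (QT AT : finType)
  (W : Omega -> {ffun 'I_K -> file_type L})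
  (theta : Omega -> 'I_K)
  (Q : 'I_N -> Omega -> QT) (A : 'I_N -> Omega -> AT)
  (i j : 'I_N) (k : 'I_K) :
  is_PIR_scheme P ends W theta Q A ->
  i != j -> k \in stored ends i -> k \in stored ends j ->
  let Wk' := filesOn W [set~ k] in
  entropy P (A i) + entropy P (A j)
    >= centropy P (A i) (pairRV Wk' (allRV Q))
       + centropy P (A j) (pairRV Wk' (allRV Q))
  /\ centropy P (A i) (pairRV Wk' (allRV Q))
       + centropy P (A j) (pairRV Wk' (allRV Q)) >= L%:R.
Proof.
move=> PIR ij ki kj /=; split; last exact: (answers_centropy_ge PIR ij ki kj).
case: PIR => -[P_ge0 P1] _.
by apply: lerD; apply: centropy_le_entropy.
Qed.
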